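(* Let $\mathcal{G}=(V,L)$ be a finite connected undirected graph with monitor set $M$ and non-monitor set $N=V\setminus M$, $\sigma=|N|$, and let $P$ be a given set of measurement paths between monitors (Uncontrollable Probing). Let $S\subseteq N$. Then: (a) if $k\le\sigma-1$ and $\mathrm{MSC}(v)\ge k+1$ for every $v\in S$, then $S$ is $k$-identifiable; (b) if $k\le\sigma$ and $S$ is $k$-identifiable, then $\mathrm{MSC}(v)\ge k$ for every $v\in S$.
   Context: Here $k\ge1$ is an integer. Failure model: a failure set is any $F\subseteq N$ (monitors never fail); a measurement path fails iff it traverses a node of $F$. For $F\subseteq N$, $P_F$ is the set of paths in $P$ traversing at least one node of $F$; $F_1,F_2$ are distinguishable iff $P_{F_1}\ne P_{F_2}$. $S\subseteq N$ is $k$-identifiable if any two failure sets $F_1,F_2$ with $|F_1|,|F_2|\le k$ and $F_1\cap S\ne F_2\cap S$ are distinguishable. For $v\in N$, $P_v$ is the set of paths in $P$ traversing $v$. $\mathrm{MSC}(v)$ is the minimum cardinality of a set $V'\subseteq N\setminus\{v\}$ with $P_v\subseteq\bigcup_{w\in V'}P_w$; if no such $V'$ exists (e.g. when $v$ lies on a two-hop measurement path monitor–$v$–monitor), $\mathrm{MSC}(v):=\sigma$. *)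

From mathcomp Require Import all_boot.
Set Implicit Arguments. Unset Strict Implicit. Unset Printing Implicit Defensive.

Section Tomography.
Variable T : finType.

Definition simple_graph (e : rel T) : Prop := irreflexive e /\ symmetric e.
Definition connected_graph (e : rel T) : Prop := forall x y : T, connect e x y.

Definition measurement_path (e : rel T) (M : {set T}) (p : seq T) : Prop :=
  match p with
  | x :: q => [/\ 1 <= size q, uniq p, path e x q, x \in M & last x q \in M]
  | [::] => False
  end.

Definition nonmon (M : {set T}) : {set T} := ~: M.
Definition sigma (M : {set T}) : nat := #|nonmon M|.

Definition paths_through (P : seq (seq T)) (F : {set T}) : seq (seq T) :=
  [seq p <- P | has (fun x => x \in F) p].

Definition paths_v (P : seq (seq T)) (v : T) : seq (seq T) :=
  [seq p <- P | v \in p].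

Definition distinguishable (P : seq (seq T)) (F1 F2 : {set T}) : Prop :=
  paths_through P F1 <> paths_through P F2.

Definition k_identifiable (M : {set T}) (P : seq (seq T)) (k : nat) (S : {set T}) : Prop :=
  forall F1 F2 : {set T}, F1 \subset nonmon M -> F2 \subset nonmon M ->
    #|F1| <= k -> #|F2| <= k -> F1 :&: S != F2 :&: S ->
    distinguishable P F1 F2.

Definition msc_cover (M : {set T}) (P : seq (seq T)) (v : T) (V' : {set T}) : bool :=
  (V' \subset nonmon M :\ v) &&
  all (fun p => has (fun w => p \in paths_v P w) (enum V')) (paths_v P v).

Definition MSC (M : {set T}) (P : seq (seq T)) (v : T) : nat :=
  if [exists V' : {set T}, msc_cover M P v V']
  then \big[minn/sigma M]_(V' : {set T} | msc_cover M P v V') #|V'|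
  else sigma M.

End Tomography.

(* A failure set F1 is told apart from F2 exactly when some measurement path meets
   one of them and avoids the other.  If v lies in F1 but not in F2, the paths
   through v that avoid F2 are such witnesses; if there were none, F2 would be a
   cover of P_v by at most k nodes, contradicting MSC(v) > k.  Conversely, a cover
   V' of P_v with |V'| < k gives the failure sets V' + v and V' with the same
   failing paths, although they differ on v in S. *)
From mathcomp Require Import all_boot.

Set Implicit Arguments.
Unset Strict Implicit.
Unset Printing Implicit Defensive.

Lemma bigminn_le (I : eqType) (r : seq I) (F : I -> nat) (s : nat) (j : I) :
  j \in r -> \big[minn/s]_(i <- r) F i <= F j.
Proof.
elim: r => //= a r IHr; rewrite inE big_cons => /orP[/eqP-> | jr].
  exact: geq_minl.
exact: leq_trans (geq_minr _ _) (IHr jr).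
Qed.

Section MinimumSetCover.
Variables (T : finType) (M : {set T}) (P : seq (seq T)).

Lemma mem_paths_through (F : {set T}) p :
  (p \in paths_through P F) = (p \in P) && has (mem F) p.
Proof. by rewrite mem_filter andbC. Qed.

Lemma distinguishable_sym (F1 F2 : {set T}) :
  distinguishable P F1 F2 -> distinguishable P F2 F1.
Proof. by move=> neq12 eq21; apply: neq12. Qed.

Lemma msc_coverP (v : T) (V' : {set T}) :
  reflect (V' \subset nonmon M :\ v /\
           forall p, p \in P -> v \in p -> has (mem V') p)
          (msc_cover M P v V').
Proof.
apply: (iffP andP) => -[subV' coverV']; split=> //.
  move=> p pP vp; have pPv : p \in paths_v P v by rewrite mem_filter vp pP.
  have /hasP[w] := allP coverV' p pPv.
  by rewrite mem_enum mem_filter => wV' /andP[wp _]; apply/hasP; exists w.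
apply/allP => p; rewrite mem_filter => /andP[vp pP].
have /hasP[w wp wV'] := coverV' p pP vp.
by apply/hasP; exists w; rewrite ?mem_enum // mem_filter wp.
Qed.

Lemma MSC_le_cover (v : T) (V' : {set T}) :
  msc_cover M P v V' -> MSC M P v <= #|V'|.
Proof.
move=> coverV'; rewrite /MSC; have -> : [exists V', msc_cover M P v V'].
  by apply/existsP; exists V'.
by rewrite /= -big_filter bigminn_le // mem_filter coverV' mem_index_enum.
Qed.

Lemma MSC_ge (v : T) (n : nat) :
  (forall V', msc_cover M P v V' -> n <= #|V'|) -> n <= sigma M ->
  n <= MSC M P v.
Proof.
move=> coverV' n_le_sigma; rewrite /MSC; case: ifP => // _.
by elim/big_ind: _ => // x y nx ny; rewrite leq_min nx ny.
Qed.

Lemma distinguishable_lt_MSC (F1 F2 : {set T}) (v : T) :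
  v \in F1 -> v \notin F2 -> F2 \subset nonmon M -> #|F2| < MSC M P v ->
  distinguishable P F1 F2.
Proof.
move=> vF1 vNF2 F2N ltF2 eqF12.
have coverF2 : msc_cover M P v F2.
  apply/msc_coverP; split.
    by apply/subsetP => x xF2; rewrite in_setD1 (subsetP F2N) // andbT;
      apply: contraNneq vNF2 => <-.
  move=> p pP vp; have : p \in paths_through P F1.
    by rewrite mem_paths_through pP; apply/hasP; exists v.
  by rewrite eqF12 mem_paths_through => /andP[].
by have := leq_trans ltF2 (MSC_le_cover coverF2); rewrite ltnn.
Qed.

Lemma paths_through_setU1_cover (v : T) (V' : {set T}) :
  msc_cover M P v V' -> paths_through P (v |: V') = paths_through P V'.
Proof.
move=> /msc_coverP[_ coverV']; apply: eq_in_filter => p pP.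
apply/hasP/hasP => [[w wp] | [w wp wV']]; last by exists w; rewrite ?setU11 ?inE ?wV' ?orbT.
rewrite in_setU1 => /orP[/eqP ew | wV']; last by exists w.
by apply/hasP; apply: coverV'; rewrite // -ew.
Qed.

Lemma k_identifiable_of_MSC (k : nat) (S : {set T}) :
  (forall v, v \in S -> k < MSC M P v) -> k_identifiable M P k S.
Proof.
move=> MSC_gt F1 F2 F1N F2N F1k F2k neqS.
have [v] : exists v, (v \in F1 :&: S) != (v \in F2 :&: S).
  by apply/existsP; apply: contra neqS => /forallP eqS; apply/eqP/setP => x; apply/eqP.
rewrite !inE; case vS: (v \in S); rewrite ?andbT ?andbF //.
have ltk := MSC_gt v vS.
case vF1: (v \in F1); case vF2: (v \in F2) => // _.
  by apply: distinguishable_lt_MSC vF1 _ F2N (leq_ltn_trans F2k ltk); rewrite vF2.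
apply/distinguishable_sym.
by apply: distinguishable_lt_MSC vF2 _ F1N (leq_ltn_trans F1k ltk); rewrite vF1.
Qed.

Lemma MSC_ge_of_k_identifiable (k : nat) (S : {set T}) (v : T) :
  S \subset nonmon M -> k <= sigma M -> k_identifiable M P k S -> v \in S ->
  k <= MSC M P v.
Proof.
move=> SN k_le_sigma kid vS; apply: MSC_ge => // V' coverV'; rewrite leqNgt.
apply/negP => ltV'; have /andP[subV' _] := coverV'.
have vNV' : v \notin V' by apply/negP => /(subsetP subV'); rewrite !inE eqxx.
have V'N : V' \subset nonmon M by apply: subset_trans subV' (subD1set _ _).
apply: (kid (v |: V') V') (paths_through_setU1_cover coverV') => //.
- by rewrite subUset sub1set (subsetP SN).
- by rewrite cardsU1 vNV'.
- exact: ltnW.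
- by apply/negP => /eqP/setP/(_ v); rewrite !inE eqxx vS (negbTE vNV').
Qed.

End MinimumSetCover.

Theorem theorem3 (T : finType) (e : rel T) (M : {set T}) (P : seq (seq T))
  (S : {set T}) (k : nat) :
  simple_graph e -> connected_graph e ->
  (forall p, p \in P -> measurement_path e M p) ->
  1 <= k ->
  S \subset nonmon M ->
  ((k <= sigma M - 1 -> (forall v, v \in S -> k + 1 <= MSC M P v) ->
      k_identifiable M P k S)
   /\
   (k <= sigma M -> k_identifiable M P k S ->
      forall v, v \in S -> k <= MSC M P v)).
Proof.
move=> _ _ _ _ SN; split=> [_ MSC_gt | k_le_sigma kid v vS].
  by apply: k_identifiable_of_MSC => v vS; rewrite -addn1 MSC_gt.
exact: MSC_ge_of_k_identifiable SN k_le_sigma kid vS.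
Qed.
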